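(* Let $X$ be a locally compact space and $f\colon X\to\mathbb{C}$. The following are equivalent: (i) $f\in C_c(X)$; (ii) $f^{-1}(\mathbb{C}^* )$ is relatively quasi-compact, and for every filter $\mathcal{F}$ on $X$ such that the image filter $i(\mathcal{F})$ converges in $\mathcal{H}X$ to some $S\in\mathcal{H}X$ (where $i\colon X\to\mathcal{H}X$, $x\mapsto\{x\}$), one has $\lim_{\mathcal{F}}f=\sum_{s\in S}f(s)$.
   Context: Quasi-compact: every open cover has a finite subcover; relatively quasi-compact: contained in a quasi-compact set; locally compact: every point has a quasi-compact Hausdorff neighbourhood (the space need not be Hausdorff). $C_c(X)$ is the linear span of the functions $g\colon X\to\mathbb{C}$ for which there is an open Hausdorff $V\subset X$ with $g|_V\in C_c(V)$ and $g=0$ outside $V$. $\mathcal{H}X$ is the set of nonempty $S\subset X$ such that every finite family of open sets each meeting $S$ has nonempty intersection, with the topology generated by $\{S:S\cap V\neq\emptyset\}$ ($V$ open) and $\{S:S\cap Q=\emptyset\}$ ($Q$ quasi-compact). *)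

From HB Require Import structures.
From mathcomp Require Import all_boot all_order all_algebra.
From mathcomp Require Import all_classical all_reals all_analysis.
From mathcomp Require Export complex.
Import numFieldNormedType.Exports.
Set Implicit Arguments. Unset Strict Implicit. Unset Printing Implicit Defensive.
Local Open Scope ring_scope.
Local Open Scope classical_set_scope.

(* The complex numbers, as the algebraically closed numeric field R[i]
   (R a real field), with the topology of its modulus. *)
Definition Cx (R : realType) : numClosedFieldType := R[i].

Section defs.
Context {X : topologicalType}.

Definition hausdorff_subset (A : set X) : Prop :=
  forall x y, A x -> A y -> x <> y ->
    exists U W : set X, [/\ open U, open W, U x, W y & U `&` W `&` A = set0].

(* locally compact: every point has a quasi-compact Hausdorff neighbourhood
   ("compact" in mathcomp-analysis is quasi-compactness, no separation). *)
Definition locally_compact_space : Prop :=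
  forall x : X, exists K : set X, [/\ nbhs x K, compact K & hausdorff_subset K].

Definition rel_quasi_compact (A : set X) : Prop :=
  exists Q : set X, compact Q /\ A `<=` Q.

(* Generators of C_c(X): g vanishes outside an open Hausdorff V, and its
   restriction to V is in C_c(V): continuous on V, with support (closure in V
   of {g <> 0}) quasi-compact. *)
Definition Cc_generator {R : realType} (g : X -> Cx R) : Prop :=
  exists V : set X, [/\ open V, hausdorff_subset V,
    {within V, continuous g},
    compact (closure [set x | g x != 0] `&` V) &
    forall x, ~ V x -> g x = 0].

Definition Cc {R : realType} (f : X -> Cx R) : Prop :=
  exists (n : nat) (c : nat -> Cx R) (g : nat -> X -> Cx R),
    (forall k, (k < n)%N -> Cc_generator (g k)) /\
    f = fun x => \sum_(k < n) c k * g k x.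

Definition HX (S : set X) : Prop :=
  S !=set0 /\
  forall (n : nat) (U : nat -> set X),
    (forall k, (k < n)%N -> open (U k) /\ S `&` U k !=set0) ->
    \bigcap_(k in [set k | (k < n)%N]) U k !=set0.

(* Subbasic open sets of HX (as sets of subsets of X; intersected with HX). *)
Definition HX_subbasic (B : set (set X)) : Prop :=
  (exists V : set X, open V /\ B = [set S | S `&` V !=set0]) \/
  (exists Q : set X, compact Q /\ B = [set S | S `&` Q = set0]).

Definition HX_open (U : set (set X)) : Prop :=
  U `<=` HX /\
  forall S, U S -> exists (n : nat) (B : nat -> set (set X)),
    [/\ forall k, (k < n)%N -> HX_subbasic (B k),
        forall k, (k < n)%N -> B k S &
        forall T, HX T -> (forall k, (k < n)%N -> B k T) -> U T].

(* The image filter i(F), i : x |-> {x}, converges to S in HX. *)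
Definition HX_image_converges (F : set_system X) (S : set X) : Prop :=
  forall U, HX_open U -> U S -> F [set x | U [set x]].

End defs.

From HB Require Import structures.
From mathcomp Require Import all_boot all_order all_algebra.
From mathcomp Require Import all_classical all_reals all_analysis.
From mathcomp Require Import complex.
Import numFieldNormedType.Exports.
Import Order.TTheory GRing.Theory Num.Theory.
Set Implicit Arguments. Unset Strict Implicit. Unset Printing Implicit Defensive.
Local Open Scope ring_scope.
Local Open Scope classical_set_scope.

(* (i) -> (ii): both conditions of (ii) are linear in f, so it suffices to check
   them on a generator g living on an open Hausdorff set V.  An element S of HX
   meets an open Hausdorff set in at most one point (two points of S would be
   separated by disjoint open sets, both meeting S), so by local compactness it
   meets every quasi-compact set in a finite set and the sums in (ii) are finite.
   If S meets V in s, then i(F) -> S forces F -> s, where g is continuous;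
   otherwise i(F) -> S forces F to leave the quasi-compact support of g.

   (ii) -> (i): cover the support of f by open Hausdorff sets V_0, ..., V_n and
   induct on n.  Shrink the cover: take open W_0, W_1 and quasi-compact C_0, C_1
   with W_0 <= C_0 <= V_0, W_1 <= C_1 <= V_1 u ... u V_n and W_0 u W_1 still
   covering the support.  On A = X \ (W_0 n W_1), the function equal to f on W_0
   and to 0 elsewhere is continuous at every point x of V_0: the limits of an
   ultrafilter U -> x form an S in HX with i(U) -> S, and every limit other than
   x lies outside V_0, hence is a zero of f, so (ii) gives f(U) -> f(x).  The
   Tietze extension of this function from the compact Hausdorff space C_0 is a
   generator h which agrees with f outside W_1, and f - h is supported in C_1. *)

Section hausdorff_subsets.
Context {X : topologicalType}.

Lemma compact_finite_subcover (I : choiceType) (D : set I) (F : I -> set X)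
    (A : set X) :
  compact A -> (forall i, D i -> open (F i)) -> A `<=` \bigcup_(i in D) F i ->
  exists2 s : seq I, [set` s] `<=` D & A `<=` \bigcup_(i in [set` s]) F i.
Proof.
move=> cA oF AF; have [->|/set0P[a _]] := eqVneq A set0.
  by exists [::] => // ? [].
(* [compact_cover] is stated for pointed spaces; a point of [A] makes [X] one. *)
pose T : ptopologicalType := HB.pack_for ptopologicalType X (isPointed.Build X a).
have : @compact T A by [].
rewrite compact_cover => /(_ I D F oF AF) [D' D'D AD'].
by exists (finmap.enum_fset D') => // i /D'D/set_mem.
Qed.

Lemma open_bigcap_seq (I : choiceType) (s : seq I) (F : I -> set X) :
  (forall i, i \in s -> open (F i)) -> open (\bigcap_(i in [set` s]) F i).
Proof.
move=> oF; rewrite bigcap_seq big_seq.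
by elim/big_ind: _ => //; [exact: openT | exact: openI].
Qed.

Lemma compact_bigcup_seq (I : choiceType) (s : seq I) (F : I -> set X) :
  (forall i, i \in s -> compact (F i)) -> compact (\bigcup_(i in [set` s]) F i).
Proof. by move=> cF; rewrite bigcup_seq big_seq; exact: bigsetU_compact. Qed.

Lemma sub_hausdorff_subset (A B : set X) :
  B `<=` A -> hausdorff_subset A -> hausdorff_subset B.
Proof.
move=> BA hA x y Bx By xy.
have [U [W [oU oW Ux Wy UWA]]] := hA x y (BA _ Bx) (BA _ By) xy.
exists U, W; split => //; apply/seteqP; split => // z [[Uz Wz] /BA Az].
by rewrite -UWA.
Qed.

Lemma hausdorff_subset_separate_compact (K C : set X) (x : X) :
  hausdorff_subset K -> compact C -> C `<=` K -> K x -> ~ C x ->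
  exists O W : set X, [/\ open O, open W, O x, C `<=` W & O `&` W `&` K = set0].
Proof.
move=> hK cC CK Kx nCx.
have /choice[UW UWP] : forall y, exists UW : set X * set X, C y ->
    [/\ open UW.1, open UW.2, UW.1 x, UW.2 y & UW.1 `&` UW.2 `&` K = set0].
  move=> y; have [Cy|nCy] := pselect (C y); last by exists (setT, setT).
  have xy : x <> y by move=> xy; apply: nCx; rewrite xy.
  by have [U [W ?]] := hK x y Kx (CK _ Cy) xy; exists (U, W).
have oW y : C y -> open (UW y).2 by case/UWP.
have [s sC CW] : exists2 s : seq X, [set` s] `<=` C &
    C `<=` \bigcup_(y in [set` s]) (UW y).2.
  by apply: compact_finite_subcover => // y Cy; exists y => //; case: (UWP y Cy).
exists (\bigcap_(y in [set` s]) (UW y).1), (\bigcup_(y in [set` s]) (UW y).2).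
split => //.
- by apply: open_bigcap_seq => y /sC/UWP[].
- by apply: bigcup_open => y /sC/UWP[].
- by move=> y /sC/UWP[].
apply/seteqP; split => // z [[Oz [y sy Wz]] Kz].
by case: (UWP y (sC y sy)) => _ _ _ _ <-; split => //; split => //; exact: Oz.
Qed.

Lemma closure_compact_hausdorff_subset (V C : set X) :
  hausdorff_subset V -> compact C -> C `<=` V -> closure C `&` V `<=` C.
Proof.
move=> hV cC CV x [clCx Vx]; apply: contrapT => nCx.
have [U [W [oU _ Ux CW UWV]]] := hausdorff_subset_separate_compact hV cC CV Vx nCx.
have [y [Cy Uy]] := clCx U (open_nbhs_nbhs (conj oU Ux)).
suff : (U `&` W `&` V) y by rewrite UWV.
by split; [split => //; exact: CW | exact: CV].
Qed.

Lemma continuous_within_const_outside {Y : topologicalType} (V K W : set X)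
    (h : X -> Y) (c : Y) :
  open V -> hausdorff_subset V -> compact K -> K `<=` V -> open W -> W `<=` K ->
  {within K, continuous h} -> (forall x, ~ W x -> h x = c) ->
  {within V, continuous h}.
Proof.
move=> oV hV cK KV oW WK cKh hc; rewrite continuous_open_subspace // => x Vx.
have [Wx|nWx] := pselect (W x).
  have : {within W, continuous h} by exact: continuous_subspaceW cKh.
  by rewrite continuous_open_subspace // => /(_ x (mem_set Wx)).
move=> N Nh; have Nc : N c by rewrite -(hc x nWx); exact: nbhs_singleton.
rewrite nbhs_filterE /=.
have [Kx|nKx] := pselect (K x).
  have KN : nbhs x [set y | K y -> N (h y)].
    exact: (subspace_continuousP _ _).1 cKh x Kx N Nh.
  apply: filterS KN => y KN.
  have [Ky|nKy] := pselect (K y); first exact: KN.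
  by rewrite /= hc // => /WK.
have nK : (~` K)° x.
  rewrite interiorC => clKx; apply/nKx/(closure_compact_hausdorff_subset hV cK KV).
  by split => //; exact/set_mem.
by apply: filterS nK => y nKy; rewrite /= hc // => /WK.
Qed.

End hausdorff_subsets.

Section locally_compact.
Context {X : topologicalType}.
Hypothesis lcX : locally_compact_space (X := X).

Lemma lc_compact_nbhs_in_open (x : X) (O : set X) : open O -> O x ->
  exists W C : set X, [/\ open W, W x, W `<=` C, C `<=` O & compact C].
Proof.
move=> oO Ox; have [K [Kx cK hK]] := lcX x.
have cKO : compact (K `&` ~` O) by apply: compact_closedI => //; exact: open_closedC.
have nKOx : ~ (K `&` ~` O) x by case=> _; apply.
have [P [W [oP oW Px KOW PWK]]] :=
  hausdorff_subset_separate_compact hK cKO (@subIsetl _ _ _) (nbhs_singleton Kx) nKOx.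
exists (P `&` K°), (K `&` ~` W); split.
- by apply: openI => //; exact: open_interior.
- by split.
- move=> z [Pz /interior_subset Kz]; split => // Wz.
  by suff : (P `&` W `&` K) z by rewrite PWK.
- by move=> z [Kz Wz]; apply: contrapT => Oz; apply/Wz/KOW.
- by apply: compact_closedI => //; exact: open_closedC.
Qed.

Lemma lc_compact_nbhs_of_compact (Q U : set X) : compact Q -> open U -> Q `<=` U ->
  exists W C : set X, [/\ open W, Q `<=` W, W `<=` C, C `<=` U & compact C].
Proof.
move=> cQ oU QU.
have /choice[WC WCP] : forall x, exists WC : set X * set X, Q x ->
    [/\ open WC.1, WC.1 x, WC.1 `<=` WC.2, WC.2 `<=` U & compact WC.2].
  move=> x; have [Qx|nQx] := pselect (Q x); last by exists (set0, set0).
  by have [W [C ?]] := lc_compact_nbhs_in_open oU (QU x Qx); exists (W, C).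
have [s sQ QW] : exists2 s : seq X, [set` s] `<=` Q &
    Q `<=` \bigcup_(x in [set` s]) (WC x).1.
  apply: compact_finite_subcover => //; first by move=> x /WCP[].
  by move=> x Qx; exists x => //; case: (WCP x Qx).
exists (\bigcup_(x in [set` s]) (WC x).1), (\bigcup_(x in [set` s]) (WC x).2).
split => //.
- by apply: bigcup_open => x /sQ/WCP[].
- by move=> z [x sx Wz]; exists x => //; case: (WCP x (sQ x sx)) => _ _ /(_ z Wz).
- by move=> z [x sx]; case: (WCP x (sQ x sx)) => _ _ _ /(_ z).
- by apply: compact_bigcup_seq => x /sQ/WCP[].
Qed.

Lemma lc_hausdorff_cover (Q : set X) : compact Q ->
  exists2 s : seq (set X), (forall V, V \in s -> open V /\ hausdorff_subset V) &
    Q `<=` \big[setU/set0]_(V <- s) V.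
Proof.
move=> cQ; have /choice[K KP] := lcX.
have [s _ QK] : exists2 s : seq X, [set` s] `<=` Q &
    Q `<=` \bigcup_(x in [set` s]) (K x)°.
  apply: compact_finite_subcover => //; first by move=> x _; exact: open_interior.
  by move=> x Qx; exists x => //; case: (KP x).
exists [seq (K x)° | x <- s].
  move=> _ /mapP[x _ ->]; split; first exact: open_interior.
  by case: (KP x) => _ _; apply: sub_hausdorff_subset; exact: interior_subset.
by rewrite big_map -bigcup_seq.
Qed.

End locally_compact.

Section complex_parts.
Context {R : realType}.
Local Notation C := (Cx R).

Lemma normr_le_sqrt_sqrD (a b : R) : `|a| <= Num.sqrt (a ^+ 2 + b ^+ 2).
Proof. by rewrite -sqrtr_sqr ler_wsqrtr // lerDl sqr_ge0. Qed.

Lemma sqrt_sqrD_le_normD (a b : R) : Num.sqrt (a ^+ 2 + b ^+ 2) <= `|a| + `|b|.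
Proof.
rewrite -[X in _ <= X]ger0_norm ?addr_ge0 // -sqrtr_sqr ler_wsqrtr //.
rewrite sqrrD -[a ^+ 2]real_normK ?num_real // -[b ^+ 2]real_normK ?num_real //.
by rewrite -addrA lerD2l lerDr mulrn_wge0 // mulr_ge0.
Qed.

Lemma normc_lt (z : C) (e : R) :
  (`|z| < e%:C)%C = (Num.sqrt (complex.Re z ^+ 2 + complex.Im z ^+ 2) < e).
Proof. by rewrite normc_def ltcR. Qed.

Lemma Re_continuous : continuous (fun z : C => complex.Re z : R).
Proof.
move=> z; apply/(@cvgrPdist_lt _ _ _ (nbhs z)) => e e0.
have /(@cvgrPdist_lt _ _ _ (nbhs z))/(_ e%:C%C) : (fun w : C => w) @ z --> z by [].
rewrite ltcR => /(_ e0); apply: filterS => w; rewrite normc_lt.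
by apply: le_lt_trans; rewrite -raddfB; exact: normr_le_sqrt_sqrD.
Qed.

Lemma Im_continuous : continuous (fun z : C => complex.Im z : R).
Proof.
move=> z; apply/(@cvgrPdist_lt _ _ _ (nbhs z)) => e e0.
have /(@cvgrPdist_lt _ _ _ (nbhs z))/(_ e%:C%C) : (fun w : C => w) @ z --> z by [].
rewrite ltcR => /(_ e0); apply: filterS => w; rewrite normc_lt addrC.
by apply: le_lt_trans; rewrite -raddfB; exact: normr_le_sqrt_sqrD.
Qed.

Lemma cvg_complex (T : Type) (F : set_system T) {FF : Filter F} (a b : T -> R)
    (la lb : R) :
  a @ F --> la -> b @ F --> lb ->
  (fun t => (a t +i* b t)%C : C) @ F --> ((la +i* lb)%C : C).
Proof.
move=> /cvgrPdist_lt cva /cvgrPdist_lt cvb; apply/cvgrPdist_lt => e.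
rewrite ltcE => /andP[/eqP e_real e0].
have e2 : 0 < complex.Re e / 2 by rewrite divr_gt0.
apply: filterS (filterI (cva _ e2) (cvb _ e2)) => t [at_ bt].
have -> : e = (complex.Re e)%:C%C by case: e e_real {e0 e2 at_ bt} => ? ? /= ->.
rewrite normc_lt /=; apply: le_lt_trans (sqrt_sqrD_le_normD _ _) _.
by rewrite [complex.Re e]splitr ltrD.
Qed.

Lemma continuous_extension_Cx (Y : topologicalType) (A : set Y) (psi : Y -> C) :
  normal_space Y -> closed A -> compact A -> {within A, continuous psi} ->
  exists g : Y -> C, continuous g /\ {in A, psi =1 g}.
Proof.
move=> nY clA cA cpsi.
have extend (p : Y -> R^o) : {within A, continuous p} ->
    exists2 q : Y -> R^o, continuous q & {in A, p =1 q}.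
  move=> cp; have [M [_ Mp]] := compact_bounded (continuous_compact cp cA).
  have M1 : 0 < `|M| + 1 by rewrite ltr_pwDr.
  have [|q [pq cq _]] := continuous_bounded_extension nY clA M1 cp.
    move=> y Ay; apply: (Mp (`|M| + 1)); last by exists y.
    by rewrite (le_lt_trans (ler_norm M)) ?ltrDl.
  by exists q.
have [qr cqr pqr] := extend (fun y => complex.Re (psi y))
  (fun y => continuous_comp (cpsi y) (@Re_continuous _)).
have [qi cqi pqi] := extend (fun y => complex.Im (psi y))
  (fun y => continuous_comp (cpsi y) (@Im_continuous _)).
exists (fun y => (qr y +i* qi y)%C); split.
  by move=> y; apply: cvg_complex; [exact: cqr | exact: cqi].
by move=> y Ay; rewrite -pqr // -pqi //; case: (psi y).
Qed.

End complex_parts.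

Section compact_hausdorff_set_type.
Context {X : topologicalType} (K : set X).

Lemma nbhs_set_type (y : set_type K) (N : set (set_type K)) : nbhs y N ->
  exists2 U : set X, open U /\ U (set_val y) & set_val @^-1` U `<=` N.
Proof. by rewrite nbhsE => -[_ [[U oU <-] Uy] UN]; exists U. Qed.

Lemma hausdorff_set_type : hausdorff_subset K -> hausdorff_space (set_type K).
Proof.
move=> hK; rewrite open_hausdorff => a b ab.
have ab' : set_val a <> set_val b by move=> /val_inj abE; rewrite abE eqxx in ab.
have [U [W [oU oW Ua Wb UWK]]] := hK _ _ (set_valP a) (set_valP b) ab'.
exists (set_val @^-1` U, set_val @^-1` W); first by split; exact: mem_set.
split; [by exists U | by exists W |].
apply/eqP/seteqP; split => // z [/= Uz Wz].
suff : (U `&` W `&` K) (set_val z) by rewrite UWK.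
by split; [exact: conj | exact: set_valP].
Qed.

Lemma compact_set_type : compact K -> compact [set: set_type K].
Proof.
move=> cK F PF _.
have FK : F (set_val @^-1` K) by apply: filterE => y; exact: set_valP.
have [x [Kx clx]] := cK _ (fmap_proper_filter set_val PF) FK.
exists (exist _ x (mem_set Kx)); split => // A N FA /nbhs_set_type[U [oU Ux] UN].
have FA' : F (set_val @^-1` (set_val @` A)) by apply: filterS FA => y Ay; exists y.
have [_ [[a Aa <-] Ua]] := clx _ _ FA' (open_nbhs_nbhs (conj oU Ux)).
by exists a; split => //; exact: UN.
Qed.

Lemma normal_set_type : compact K -> hausdorff_subset K -> normal_space (set_type K).
Proof.
move=> cK hK; apply: compact_normal; first exact: hausdorff_set_type.
exact: compact_set_type.
Qed.

End compact_hausdorff_set_type.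

Section HX.
Context {X : topologicalType}.

Lemma HX_set1 (x : X) : HX [set x].
Proof.
split; first by exists x.
by move=> n U HU; exists x => k /HU[_ [y [-> ?]]].
Qed.

Lemma HX_open_subbasic (B : set (set X)) : HX_subbasic B -> HX_open (HX `&` B).
Proof.
move=> sB; split=> [|S [HS BS]]; first exact: subIsetl.
by exists 1%N, (fun=> B); split => // T HT /(_ 0%N isT).
Qed.

Lemma HX_setI_hausdorff (S V : set X) (s : X) :
  HX S -> open V -> hausdorff_subset V -> S s -> V s -> S `&` V = [set s].
Proof.
move=> [_ HS] oV hV Ss Vs; apply/seteqP; split=> [z [Sz Vz]|_ ->] //.
apply: contrapT => zs; have [U [W [oU oW Uz Ws UWV]]] := hV z s Vz Vs zs.
pose G k := if k == 0%N then U `&` V else W `&` V.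
have [k|y Gy] := HS 2%N G.
  by case: k => [|[|//]] _; split; [exact: openI | exists z | exact: openI | exists s].
have [[Uy Vy] [Wy _]] := (Gy 0%N isT, Gy 1%N isT).
by suff : (U `&` W `&` V) y by rewrite UWV.
Qed.

Lemma HX_setI_compact_finite (S Q : set X) : locally_compact_space (X := X) ->
  HX S -> compact Q -> finite_set (S `&` Q).
Proof.
move=> lcX HS cQ; have [s sV QV] := lc_hausdorff_cover lcX cQ.
apply: (@sub_finite_set _ _ (\bigcup_(V in [set` s]) (S `&` V))).
  by move=> z [Sz /QV]; rewrite -bigcup_seq => -[V sV' Vz]; exists V.
apply: bigcup_finite => [|V /sV[oV hV]]; first exact: finite_seq.
have [->|/set0P[z [Sz Vz]]] := eqVneq (S `&` V) set0; first exact: finite_set0.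
by rewrite (HX_setI_hausdorff _ oV hV Sz Vz).
Qed.

Lemma HX_image_cvg_open (F : set_system X) {FF : Filter F} (S W : set X) :
  HX S -> HX_image_converges F S -> open W -> S `&` W !=set0 -> F W.
Proof.
move=> HS FS oW SW; pose B := [set T : set X | T `&` W !=set0].
have oB : HX_open (HX `&` B) by apply: HX_open_subbasic; left; exists W.
by apply: filterS (FS _ oB (conj HS SW)) => x [_ [y [-> Wy]]].
Qed.

Lemma HX_image_cvg_compact (F : set_system X) {FF : Filter F} (S Q : set X) :
  HX S -> HX_image_converges F S -> compact Q -> S `&` Q = set0 -> F (~` Q).
Proof.
move=> HS FS cQ SQ; pose B := [set T : set X | T `&` Q = set0].
have oB : HX_open (HX `&` B) by apply: HX_open_subbasic; right; exists Q.
apply: filterS (FS _ oB (conj HS SQ)) => x [_ xQ] Qx.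
by suff : ([set x] `&` Q) x by rewrite xQ.
Qed.

End HX.

Section ultrafilter_limits.
Context {X : topologicalType}.

Lemma filter_bigcap_ord (F : set_system X) {FF : Filter F} (n : nat) (V : nat -> set X) :
  (forall k, (k < n)%N -> F (V k)) -> F (\bigcap_(k < n) V k).
Proof.
rewrite bigcap_mkord => FV; rewrite big_seq.
by elim/big_ind: _ => //; [exact: filterT | exact: filterI | move=> k _; exact: FV].
Qed.

Lemma cvg_hausdorff_subset_eq (F : set_system X) {FF : ProperFilter F} (V : set X)
    (x y : X) :
  open V -> hausdorff_subset V -> F --> x -> F --> y -> V x -> V y -> x = y.
Proof.
move=> oV hV Fx Fy Vx Vy; apply: contrapT => xy.
have [U [W [oU oW Ux Wy UWV]]] := hV x y Vx Vy xy.
have FU : F U by apply: Fx; exact: open_nbhs_nbhs.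
have FW : F W by apply: Fy; exact: open_nbhs_nbhs.
have FV : F V by apply: Fx; exact: open_nbhs_nbhs.
have [z UWVz] := filter_ex (filterI (filterI FU FW) FV).
by suff : (U `&` W `&` V) z by rewrite UWV.
Qed.

Variable U : set_system X.
Hypothesis UU : UltraFilter U.

Lemma ultra_limits_HX (x : X) : U --> x -> HX [set s | U --> s].
Proof.
move=> Ux; split; first by exists x.
have PU : ProperFilter U by case: UU.
move=> n V UV; apply: (filter_ex (F := U)).
apply: filter_bigcap_ord => k /UV[oV [s [Us Vs]]].
by apply: Us; exact: open_nbhs_nbhs.
Qed.

Lemma ultra_image_converges : HX_image_converges U [set s | U --> s].
Proof.
move=> O [_ HO] /HO[n [B [sB BS BO]]]; have PU : ProperFilter U by case: UU.
suff : U (\bigcap_(k < n) [set y | B k [set y]]).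
  by apply: filterS => y By; apply: BO => //; exact: HX_set1.
apply: filter_bigcap_ord => k kn; move: (BS k kn).
case: (sB k kn) => [[V [oV ->]] [s [Us Vs]]|[Q [cQ ->]] SQ].
  by apply: filterS (Us V (open_nbhs_nbhs (conj oV Vs))) => y Vy; exists y.
have [UQ|UnQ] := in_ultra_setVsetC Q UU.
  have [q [Qq]] := cQ U PU UQ; rewrite (ultra_cvg_clusterE UU) => Uq.
  by suff : ([set s | U --> s] `&` Q) q by rewrite SQ.
by apply: filterS UnQ => y nQy; apply/seteqP; split => // z [-> /nQy].
Qed.

End ultrafilter_limits.

Lemma fsum_setI_support (T : choiceType) (V : nmodType) (h : T -> V) (S Q : set T) :
  [set x | h x != 0] `<=` Q -> \sum_(s \in S) h s = \sum_(s \in S `&` Q) h s.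
Proof.
move=> hQ; apply/esym/fsbig_widen => [|z [Sz SQz]]; first exact: subIsetl.
by apply/eqP; apply: contrapT => /negP hz; apply/SQz/(conj Sz)/hQ.
Qed.

Lemma support_addr (T : Type) (V : nmodType) (f g : T -> V) :
  [set x | f x + g x != 0] `<=` [set x | f x != 0] `|` [set x | g x != 0].
Proof.
move=> x /= fgx; have [fx0|fx] := eqVneq (f x) 0; last by left.
by right; rewrite fx0 add0r in fgx.
Qed.

Section Cc_criterion.
Context {R : realType} {X : topologicalType}.
Local Notation C := (Cx R).

Definition Cc_criterion (f : X -> C) : Prop :=
  rel_quasi_compact [set x | f x != 0] /\
  forall (F : set_system X) (S : set X), ProperFilter F ->
    HX S -> HX_image_converges F S -> f @ F --> \sum_(s \in S) f s.

Lemma Cc_criterion0 : Cc_criterion (fun=> 0).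
Proof.
split; first by exists set0; split; [exact: compact0 | move=> x /=; rewrite eqxx].
by move=> F S FF _ _; rewrite fsbig1 //; exact: cvg_cst.
Qed.

Lemma Cc_generator_criterion (g : X -> C) : Cc_generator g -> Cc_criterion g.
Proof.
move=> [V [oV hV cg cK gV]].
have gV' : [set x | g x != 0] `<=` V.
  by move=> x /= gx; apply: contrapT => /gV gx0; rewrite gx0 eqxx in gx.
split.
  exists (closure [set x | g x != 0] `&` V); split => // x gx.
  by split; [exact: subset_closure | exact: gV'].
move=> F S FF HS FS; rewrite (fsum_setI_support _ gV').
have [SV0|/set0P[s [Ss Vs]]] := eqVneq (S `&` V) set0.
  rewrite SV0 fsbig_set0 => N /nbhs_singleton N0; rewrite nbhs_filterE.
  have SK0 : S `&` (closure [set x | g x != 0] `&` V) = set0.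
    by rewrite setIC -setIA [V `&` S]setIC SV0 setI0.
  apply: (filterS (F := F)) (HX_image_cvg_compact HS FS cK SK0) => x xK /=.
  have [gx0|gx] := eqVneq (g x) 0; first by rewrite gx0.
  by case: xK; split; [exact: subset_closure | exact: gV'].
rewrite (HX_setI_hausdorff HS oV hV Ss Vs) fsbig_set1 => N; rewrite nbhs_filterE.
move: cg; rewrite continuous_open_subspace // => /(_ s (mem_set Vs)) /[apply].
rewrite nbhsE => -[W [oW Ws] WN].
have SWV : S `&` (W `&` V) !=set0 by exists s.
by apply: (filterS (F := F)) (HX_image_cvg_open HS FS (openI oW oV) SWV) => x [/WN].
Qed.

Lemma Cc_criterion_cvg_within (f : X -> C) (B : set X) (x : X) :
  Cc_criterion f ->
  (forall U, UltraFilter U -> U B -> U --> x ->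
     forall s, U --> s -> s <> x -> f s = 0) ->
  f @ within B (nbhs x) --> f x.
Proof.
(* Otherwise some ultrafilter U through B converging to x avoids f^-1 N, but
   its limits form an S in HX with i(U) -> S, and (ii) gives f(U) -> f x. *)
move=> [_ Lf] f0 N Nfx; rewrite nbhs_filterE; apply: contrapT => nfN.
pose A := B `&` ~` (f @^-1` N).
have clA : closure A x.
  move=> M Mx; apply/set0P/eqP => AM0; apply: nfN; apply: filterS Mx => y My By.
  by apply: contrapT => nNy; suff : (A `&` M) y by rewrite AM0.
have [U [UU AU]] := ultraFilterLemma (@within_nbhs_proper _ A x clA).
have PU : ProperFilter U by case: UU.
have UA : U A by apply: AU; exact: withinT.
have Ux : U --> x by move=> M Mx; apply: AU; apply: filterS Mx => y.
have sum_fx : \sum_(s \in [set s | U --> s]) f s = f x.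
  rewrite -(@fsbig_widen _ _ _ _ [set x]) ?fsbig_set1 //; first by move=> _ ->.
  have UB : U B by apply: filterS UA => ? [].
  by move=> s [Us sx]; exact: (f0 U UU UB Ux s Us sx).
have UN : U (f @^-1` N).
  apply: (Lf U _ PU (ultra_limits_HX UU Ux) (ultra_image_converges UU)).
  by rewrite sum_fx.
by have [y [Ny [_ []]]] := filter_ex (filterI UN UA).
Qed.

Hypothesis lcX : locally_compact_space (X := X).

Lemma Cc_criterionD (f g : X -> C) :
  Cc_criterion f -> Cc_criterion g -> Cc_criterion (fun x => f x + g x).
Proof.
move=> [[Qf [cQf fQ]] Lf] [[Qg [cQg gQ]] Lg].
have fQ' : [set x | f x != 0] `<=` Qf `|` Qg by move=> x /fQ; left.
have gQ' : [set x | g x != 0] `<=` Qf `|` Qg by move=> x /gQ; right.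
have fgQ : [set x | f x + g x != 0] `<=` Qf `|` Qg.
  by move=> x /(@support_addr _ _ f g)[/fQ'|/gQ'].
split; first by exists (Qf `|` Qg); split => //; exact: compactU.
move=> F S FF HS FS; rewrite (fsum_setI_support _ fgQ) fsbig_split.
  rewrite -(fsum_setI_support _ fQ') -(fsum_setI_support _ gQ').
  exact: cvgD (Lf F S FF HS FS) (Lg F S FF HS FS).
exact: HX_setI_compact_finite (compactU cQf cQg).
Qed.

Lemma Cc_criterionZ (c : C) (f : X -> C) :
  Cc_criterion f -> Cc_criterion (fun x => c * f x).
Proof.
move=> [[Q [cQ fQ]] Lf].
have cfQ : [set x | c * f x != 0] `<=` Q.
  by move=> x /=; rewrite mulf_eq0 negb_or => /andP[_ /fQ].
split; first by exists Q.
move=> F S FF HS FS; rewrite (fsum_setI_support _ cfQ) -fsbig_distrr.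
  by rewrite -(fsum_setI_support _ fQ); exact: cvgM (cvg_cst c) (Lf F S FF HS FS).
exact: HX_setI_compact_finite.
Qed.

Lemma Cc_criterion_of_Cc (f : X -> C) : Cc f -> Cc_criterion f.
Proof.
move=> [n [c [g [gg ->]]]]; elim: n gg => [|n IHn] gg.
  by under eq_fun do rewrite big_ord0; exact: Cc_criterion0.
under eq_fun do rewrite big_ord_recr /=.
apply: Cc_criterionD; first by apply: IHn => k /ltnW/gg.
exact/Cc_criterionZ/Cc_generator_criterion/gg.
Qed.

End Cc_criterion.

Section generator_construction.
Context {R : realType} {X : topologicalType}.
Local Notation C := (Cx R).
Variables (f : X -> C) (V W0 C0 W1 : set X).
Hypotheses (Lf : Cc_criterion f) (oV : open V) (hV : hausdorff_subset V)
  (oW0 : open W0) (oW1 : open W1) (cC0 : compact C0)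
  (W0C0 : W0 `<=` C0) (C0V : C0 `<=` V) (fW : [set x | f x != 0] `<=` W0 `|` W1).

Let A := ~` (W0 `&` W1).
Let phi := patch (fun=> 0) W0 f.

Let f_eq0 x : ~ W0 x -> ~ W1 x -> f x = 0.
Proof. by move=> nW0 nW1; apply/eqP; apply: contrapT => /negP/fW[]. Qed.

Let f_cvg_within_AW0 x : V x -> f @ within (A `&` W0) (nbhs x) --> f x.
Proof.
(* A limit s <> x of U lies outside the Hausdorff set V, hence outside W0, and
   outside W1 too, because U contains A `&` W0, which misses W1. *)
move=> Vx; apply: Cc_criterion_cvg_within => // U UU UAW0 Ux s Us sx.
have PU : ProperFilter U by case: UU.
have nVs : ~ V s by move=> Vs; apply: sx; exact: (cvg_hausdorff_subset_eq oV hV Us Ux).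
apply: f_eq0 => [/W0C0/C0V //|W1s].
have UW1 : U W1 by apply: Us; exact: open_nbhs_nbhs.
by have [z [[Az W0z] W1z]] := filter_ex (filterI UAW0 UW1); apply: Az.
Qed.

Let phi_in x : W0 x -> phi x = f x.
Proof. by move=> W0x; rewrite /phi patchT ?inE. Qed.

Let phi_out x : ~ W0 x -> phi x = 0.
Proof. by move=> nW0x; rewrite /phi patchC ?inE. Qed.

Let phi_cvg_within x : V x -> A x -> phi @ within A (nbhs x) --> phi x.
Proof.
move=> Vx Ax N Nphi; rewrite nbhs_filterE.
have fN : nbhs (f x) N -> nbhs x [set y | (A `&` W0) y -> N (f y)].
  exact: f_cvg_within_AW0.
have [W0x|nW0x] := pselect (W0 x).
  rewrite phi_in // in Nphi.
  apply: filterS (filterI (fN Nphi) (open_nbhs_nbhs (conj oW0 W0x))) => y [fNy W0y] Ay.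
  by change (N (phi y)); rewrite phi_in //; exact: fNy.
rewrite (phi_out nW0x) in Nphi.
have N0 : N 0 := nbhs_singleton Nphi.
have [W1x|nW1x] := pselect (W1 x).
  apply: filterS (open_nbhs_nbhs (conj oW1 W1x)) => y W1y Ay.
  by change (N (phi y)); rewrite phi_out // => W0y; exact: Ay.
rewrite -(f_eq0 nW0x nW1x) in Nphi.
apply: filterS (fN Nphi) => y fNy Ay; change (N (phi y)).
by have [W0y|nW0y] := pselect (W0 y); [rewrite phi_in //; exact: fNy | rewrite phi_out].
Qed.

Let AC : set (set_type C0) := set_val @^-1` A.

Let closed_AC : closed AC.
Proof.
apply: preimage_closed; first by move=> y _; exact: initial_continuous.
by apply: open_closedC; exact: openI.
Qed.

Let phi_set_type_continuous : {within AC, continuous (sigL C0 phi)}.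
Proof.
apply/subspace_continuousP => y ACy N Nphi; rewrite nbhs_filterE.
have Vy : V (set_val y) by apply/C0V/set_valP.
have phiN : nbhs (set_val y) [set z | A z -> N (phi z)] := phi_cvg_within Vy ACy Nphi.
suff : nbhs y [set z | AC z -> N (sigL C0 phi z)] by [].
have : nbhs y (set_val @^-1` [set z | A z -> N (phi z)]).
  exact: (@initial_continuous _ _ (@set_val X C0) y _ phiN).
by apply: filterS => z Hz; exact: Hz.
Qed.

Lemma Cc_generator_eq_outside : exists h : X -> C,
  Cc_generator h /\ forall x, ~ W1 x -> h x = f x.
Proof.
have hC0 : hausdorff_subset C0 by exact: sub_hausdorff_subset hV.
have cAC : compact AC.
  by rewrite -[AC]setTI; exact: compact_closedI (compact_set_type cC0) _.
have [g [cg phig]] := continuous_extension_Cx (normal_set_type cC0 hC0) closed_AC cAC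
  phi_set_type_continuous.
pose h := valL_ 0 g.
have hC0g y : h (set_val y) = g y by exact: (congr1 (@^~ y) (valLK 0 g)).
have hC0phi x : C0 x -> A x -> h x = phi x.
  by move=> C0x Ax; rewrite -[x]/(set_val (exist _ x (mem_set C0x))) hC0g -phig // inE.
have h0 x : ~ C0 x -> h x = 0.
  by move=> nC0x; rewrite /h /valL_ /= oinv_set_val insubN // notin_setE.
have hW0 x : ~ W0 x -> h x = 0.
  move=> nW0x; have [C0x|/h0 //] := pselect (C0 x).
  by rewrite hC0phi ?phi_out // => -[].
exists h; split; last first.
  move=> x nW1x; have [C0x|nC0x] := pselect (C0 x).
    rewrite hC0phi // => [|[_ //]].
    by have [W0x|nW0x] := pselect (W0 x); [rewrite phi_in | rewrite phi_out ?f_eq0].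
  by rewrite h0 // f_eq0 // => /W0C0.
exists V; split => //.
- apply: (continuous_within_const_outside oV hV cC0 C0V oW0 W0C0 _ hW0).
  by apply/subspace_sigL_continuousP; rewrite /h valLK.
- have -> : closure [set x | h x != 0] `&` V = closure [set x | h x != 0] `&` C0.
    apply/seteqP; split => x [clx Vx]; split => //; last exact: C0V.
    apply: (closure_compact_hausdorff_subset hV cC0 C0V); split => //.
    apply: closureS clx => z /= hz; apply: contrapT => /h0 hz0.
    by rewrite hz0 eqxx in hz.
  by rewrite setIC; apply: compact_closedI => //; exact: closed_closure.
- by move=> x nVx; apply: h0 => /C0V.
Qed.

End generator_construction.

Section Cc_span.
Context {R : realType} {X : topologicalType}.
Local Notation C := (Cx R).

Lemma Cc0 : Cc (fun _ : X => 0 : C).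
Proof.
exists 0%N, (fun=> 0), (fun _ _ => 0); split => //.
by apply/funext => x; rewrite big_ord0.
Qed.

Lemma Cc_generator_Cc (h : X -> C) : Cc_generator h -> Cc h.
Proof.
exists 1%N, (fun=> 1), (fun=> h); split => //.
by apply/funext => x; rewrite big_ord1 mul1r.
Qed.

Lemma CcD (a b : X -> C) : Cc a -> Cc b -> Cc (fun x => a x + b x).
Proof.
move=> [n [c [g [gg ->]]]] [m [d [k [kk ->]]]].
exists (n + m)%N, (fun i => if (i < n)%N then c i else d (i - n)%N),
  (fun i => if (i < n)%N then g i else k (i - n)%N); split.
  move=> i inm; case: ifP => [/gg //|/negbT]; rewrite -leqNgt => ni.
  by apply: kk; rewrite ltn_subLR.
apply/funext => x; rewrite big_split_ord /=; congr (_ + _).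
  by apply: eq_bigr => i _; rewrite ltn_ord.
by apply: eq_bigr => i _; rewrite ltnNge leq_addr /= addKn.
Qed.

End Cc_span.

Section Cc_of_criterion.
Context {R : realType} {X : topologicalType}.
Local Notation C := (Cx R).
Hypothesis lcX : locally_compact_space (X := X).

Lemma Cc_of_criterion_cover (s : seq (set X)) (f : X -> C) (Q : set X) :
  Cc_criterion f -> compact Q -> [set x | f x != 0] `<=` Q ->
  (forall V, V \in s -> open V /\ hausdorff_subset V) ->
  Q `<=` \big[setU/set0]_(V <- s) V -> Cc f.
Proof.
elim: s f Q => [|V s IHs] f Q Lf cQ fQ sV; rewrite ?big_nil ?big_cons => QV.
  suff -> : f = fun=> 0 by exact: Cc0.
  by apply/funext => x; apply/eqP; apply: contrapT => /negP/fQ/QV.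
have [oV hV] := sV V (mem_head _ _).
have sV' W : W \in s -> open W /\ hausdorff_subset W.
  by move=> Ws; apply: sV; rewrite in_cons Ws orbT.
pose U := \big[setU/set0]_(W <- s) W.
have oU : open U by rewrite /U -bigcup_seq; apply: bigcup_open => W /sV'[].
have [W0 [C0 [oW0 QW0 W0C0 C0V cC0]]] : exists W0 C0 : set X,
    [/\ open W0, Q `&` ~` U `<=` W0, W0 `<=` C0, C0 `<=` V & compact C0].
  apply: lc_compact_nbhs_of_compact => //; first exact/compact_closedI/open_closedC.
  by move=> x [/QV[//|Ux]] /(_ Ux).
have [W1 [C1 [oW1 QW1 W1C1 C1U cC1]]] : exists W1 C1 : set X,
    [/\ open W1, Q `&` ~` W0 `<=` W1, W1 `<=` C1, C1 `<=` U & compact C1].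
  apply: lc_compact_nbhs_of_compact => //; first exact/compact_closedI/open_closedC.
  by move=> x [Qx nW0x]; apply: contrapT => nUx; exact/nW0x/QW0.
have fW : [set x | f x != 0] `<=` W0 `|` W1.
  move=> x /fQ Qx; have [W0x|nW0x] := pselect (W0 x); [by left | right].
  exact: QW1.
have [h [gh hf]] := Cc_generator_eq_outside Lf oV hV oW0 oW1 cC0 W0C0 C0V fW.
have Lfh : Cc_criterion (fun x => f x + (-1) * h x).
  exact/Cc_criterionD/Cc_criterionZ/Cc_generator_criterion.
suff Cfh : Cc (fun x => f x + (-1) * h x).
  suff -> : f = fun x => h x + (f x + (-1) * h x) by exact: CcD (Cc_generator_Cc gh) Cfh.
  by apply/funext => x; rewrite mulN1r addrC subrK.
apply: (IHs _ C1) => // x /= fhx; apply/W1C1; apply: contrapT => nW1x.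
by rewrite hf // mulN1r subrr eqxx in fhx.
Qed.

Lemma Cc_of_criterion (f : X -> C) : Cc_criterion f -> Cc f.
Proof.
move=> Lf; have [Q [cQ fQ]] := Lf.1.
have [s sV QV] := lc_hausdorff_cover lcX cQ.
exact: Cc_of_criterion_cover Lf cQ fQ sV QV.
Qed.

End Cc_of_criterion.

Theorem proposition4p1 (R : realType) (X : topologicalType) (f : X -> Cx R) :
  locally_compact_space (X := X) ->
  (Cc f <->
   (rel_quasi_compact [set x | f x != 0] /\
    forall (F : set_system X) (S : set X), ProperFilter F ->
      HX S -> HX_image_converges F S ->
      f @ F --> \sum_(s \in S) f s)).
Proof.
move=> lcX; split; [exact: Cc_criterion_of_Cc | exact: Cc_of_criterion].
Qed.
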